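(* If the NNF DAG of $F$ (equivalently $\hat F(\mathbf{X},\neg\mathbf{X},\mathbf{Y})$) is in weak decomposable NNF (wDNNF), then $\delta_i=\Delta_i$ and $\gamma_i=\Gamma_i$ (as Boolean functions of $\mathbf{X}_{i+1}^n,\mathbf{Y}$) for every $i\in\{1,\ldots,n\}$.
   Context: $\mathbf{X}=(x_1,\ldots,x_n)$ are outputs and $\mathbf{Y}=(y_1,\ldots,y_m)$ inputs; $\mathbf{X}_i^j=(x_i,\ldots,x_j)$. $\Delta_i\equiv\neg\exists\mathbf{X}_1^{i-1}F(\mathbf{X}_1^{i-1},0,\mathbf{X}_{i+1}^n,\mathbf{Y})$ and $\Gamma_i\equiv\neg\exists\mathbf{X}_1^{i-1}F(\mathbf{X}_1^{i-1},1,\mathbf{X}_{i+1}^n,\mathbf{Y})$ (the constant occupies the position of $x_i$). An NNF formula uses only $\wedge,\vee$ and negations applied to variables, represented as a rooted DAG with $\wedge/\vee$ internal nodes and literal leaves. For an internal node representing subformula $\alpha$, $\mathrm{lits}(\alpha)$ is the set of literals labeling leaves having a path to that node. The NNF DAG is in wDNNF if for every $\wedge$-node representing $\alpha=\alpha_1\wedge\cdots\wedge\alpha_k$ there is no literal $l$ and distinct $p,q\in\{1,\ldots,k\}$ with $l\in\mathrm{lits}(\alpha_p)$ and $\neg l\in\mathrm{lits}(\alpha_q)$. $\hat F(\mathbf{X},\overline{\mathbf{X}},\mathbf{Y})$ is obtained from the NNF DAG of $F$ by replacing each leaf $\neg x_i$ ($x_i\in\mathbf{X}$) by a fresh variable $\overline{x_i}$.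 For length-$i$ bit-vectors $\mathbf{b},\mathbf{c}$, $\hat F(\mathbf{b},\mathbf{X}_{i+1}^n,\mathbf{c},\neg\mathbf{X}_{i+1}^n,\mathbf{Y})$ sets $(x_1,\ldots,x_i):=\mathbf{b}$, $(\overline{x_1},\ldots,\overline{x_i}):=\mathbf{c}$ and $\overline{x_k}:=\neg x_k$ for $k>i$. Define $\delta_i=\neg\hat F(\mathbf{1}^{i-1}0,\mathbf{X}_{i+1}^n,\mathbf{1}^i,\neg\mathbf{X}_{i+1}^n,\mathbf{Y})$ and $\gamma_i=\neg\hat F(\mathbf{1}^{i},\mathbf{X}_{i+1}^n,\mathbf{1}^{i-1}0,\neg\mathbf{X}_{i+1}^n,\mathbf{Y})$, where $\mathbf{1}^{i-1}0$ is $i-1$ ones followed by a $0$. *)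

From mathcomp Require Import all_boot.
Set Implicit Arguments. Unset Strict Implicit. Unset Printing Implicit Defensive.

(* Variables of F: outputs X = x_0..x_{n-1} (inl) and inputs Y = y_0..y_{m-1} (inr).
   Indices are 0-based: paper's x_{i} is our x_{i-1}. *)
Definition var (n m : nat) := ('I_n + 'I_m)%type.

(* NNF formula: a literal leaf (b = true : positive literal v, b = false : ~ v),
   or a k-ary AND / OR node. A DAG is represented by its tree unfolding, which
   has the same semantics and the same lits(.) at every node. *)
Inductive nnf (V : Type) : Type :=
| Lit of bool & V
| And of seq (nnf V)
| Or of seq (nnf V).
Arguments And {V} _.
Arguments Or {V} _.

Fixpoint lits (V : Type) (f : nnf V) : seq (bool * V) :=
  match f with
  | Lit b v => [:: (b, v)]
  | And fs => flatten (map (@lits V) fs)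
  | Or fs => flatten (map (@lits V) fs)
  end.

Definition negl (V : Type) (l : bool * V) : bool * V := (~~ l.1, l.2).

Fixpoint wDNNF (V : eqType) (f : nnf V) : bool :=
  match f with
  | Lit _ _ => true
  | Or fs => all (@wDNNF V) fs
  | And fs =>
      all (@wDNNF V) fs &&
      all (fun p => all (fun q =>
             (p != q) ==>
             all (fun l => negl l \notin lits (nth (And [::]) fs q))
                 (lits (nth (And [::]) fs p)))
           (iota 0 (size fs))) (iota 0 (size fs))
  end.

(* Evaluation of F-hat(X, Xbar, Y): positive leaf x_k reads ax k, the leaf ~x_k
   (replaced by fresh xbar_k) reads axb k; Y literals are evaluated normally. *)
Fixpoint eval_hat (n m : nat) (ax axb : 'I_n -> bool) (ay : 'I_m -> bool)
    (f : nnf (var n m)) : bool :=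
  match f with
  | Lit b (inl k) => if b then ax k else axb k
  | Lit b (inr j) => if b then ay j else ~~ ay j
  | And fs => all (eval_hat ax axb ay) fs
  | Or fs => has (eval_hat ax axb ay) fs
  end.

Definition eval (n m : nat) (ax : 'I_n -> bool) (ay : 'I_m -> bool)
    (f : nnf (var n m)) : bool :=
  eval_hat ax (fun k => ~~ ax k) ay f.

(* As functions of the full assignment; they only depend on ax k for k > i. *)
Definition DeltaGamma (n m : nat) (f : nnf (var n m)) (c : bool) (i : 'I_n)
    (ax : 'I_n -> bool) (ay : 'I_m -> bool) : bool :=
  ~~ [exists b : {ffun 'I_n -> bool},
        eval (fun k => if (k < i)%N then b k else if k == i then c else ax k) ay f].

Definition Delta n m (f : nnf (var n m)) i ax ay := DeltaGamma f false i ax ay.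
Definition Gamma n m (f : nnf (var n m)) i ax ay := DeltaGamma f true i ax ay.

Definition delta (n m : nat) (f : nnf (var n m)) (i : 'I_n)
    (ax : 'I_n -> bool) (ay : 'I_m -> bool) : bool :=
  ~~ eval_hat (fun k => if (k < i)%N then true else if k == i then false else ax k)
              (fun k => if (k <= i)%N then true else ~~ ax k) ay f.

Definition gamma (n m : nat) (f : nnf (var n m)) (i : 'I_n)
    (ax : 'I_n -> bool) (ay : 'I_m -> bool) : bool :=
  ~~ eval_hat (fun k => if (k <= i)%N then true else ax k)
              (fun k => if (k < i)%N then true else if k == i then false else ~~ ax k) ay f.

(* Setting [x_k = xbar_k = 1] for every [k < i] relaxes the existential
   quantifier over [X_1^(i-1)]: since [F-hat] is monotone, any honest witness
   makes the relaxed formula true, so [delta_i <= Delta_i]. Conversely, a model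
   of [F-hat] in which each variable has [x_k] or [xbar_k] true can be refined
   into an honest model of [F] when [F] is in wDNNF: the children of an AND node
   share no complementary literal, so honest models of the children can be
   glued together variable by variable. *)

From mathcomp Require Import all_boot.
From Stdlib Require List.
Set Implicit Arguments. Unset Strict Implicit.

Section NNFInduction.
Variables (V : Type) (P : nnf V -> Prop).
Hypothesis PLit : forall b v, P (Lit b v).
Hypothesis PAnd : forall fs, (forall g, List.In g fs -> P g) -> P (And fs).
Hypothesis POr : forall fs, (forall g, List.In g fs -> P g) -> P (Or fs).

Fixpoint nnf_deep_ind (f : nnf V) : P f :=
  let fix children (fs : seq (nnf V)) : forall g, List.In g fs -> P g :=
    match fs with
    | [::] => fun g (in_nil : False) => match in_nil with end
    | h :: fs' => fun g in_hfs =>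
        match in_hfs with
        | or_introl e => eq_ind h P (nnf_deep_ind h) g e
        | or_intror in_fs' => children fs' g in_fs'
        end
    end in
  match f with
  | Lit b v => PLit b v
  | And fs => PAnd (children fs)
  | Or fs => POr (children fs)
  end.
End NNFInduction.

Lemma allInP T (p : pred T) s : reflect (forall x, List.In x s -> p x) (all p s).
Proof.
elim: s => /= [|x s IH]; first by constructor.
case px: (p x) => /=; last by constructor => H; rewrite H in px; auto.
case: IH => H; constructor; first by move=> y [<-|]; auto.
by move=> H'; apply: H => y yin; apply: H'; auto.
Qed.

Lemma hasInP T (p : pred T) s : reflect (exists2 x, List.In x s & p x) (has p s).
Proof.
elim: s => /= [|x s IH]; first by constructor => [[]].
case px: (p x) => /=; first by constructor; exists x; auto.
case: IH => H; constructor; first by case: H => y ? ?; exists y; auto.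
by case=> y [<-|yin] py; [rewrite py in px | apply: H; exists y].
Qed.

Lemma lits_child (V : eqType) (fs : seq (nnf V)) (g : nnf V) :
  List.In g fs -> {subset lits g <= flatten (map (@lits V) fs)}.
Proof.
elim: fs => //= h fs IH [-> l lin | gin l lin]; rewrite mem_cat ?lin //.
by rewrite IH ?orbT.
Qed.

Definition clash_free (V : eqType) (g h : nnf V) : bool :=
  all (fun l => negl l \notin lits h) (lits g).

Lemma wDNNF_And (V : eqType) (fs : seq (nnf V)) :
  wDNNF (And fs) -> (forall g, List.In g fs -> wDNNF g) /\ pairwise (@clash_free V) fs.
Proof.
move=> /= /andP[/allInP wfs clash]; split => //.
apply/(pairwiseP (And [::])) => p q; rewrite !inE => ltp ltq ltpq.
move: clash => /allP /(_ p); rewrite mem_iota add0n ltp => /(_ isT) /allP /(_ q).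
by rewrite mem_iota add0n ltq (ltn_eqF ltpq) => /(_ isT).
Qed.

Section Refinement.
Variables (n m : nat) (ay : 'I_m -> bool).
Implicit Types (f g h : nnf (var n m)) (b ax axb : 'I_n -> bool) (i k : 'I_n).

Lemma eval_hat_mono f ax axb ax' axb' :
  (forall k, (true, inl k) \in lits f -> ax k -> ax' k) ->
  (forall k, (false, inl k) \in lits f -> axb k -> axb' k) ->
  eval_hat ax axb ay f -> eval_hat ax' axb' ay f.
Proof.
elim/nnf_deep_ind: f ax axb ax' axb' => [bl [k|j]|fs IH|fs IH] ax axb ax' axb' pos neg //=.
- by case: bl pos neg => pos neg; [apply: pos | apply: neg]; rewrite mem_seq1.
- move=> /allInP evfs; apply/allInP => g gin.
  by apply: (IH g gin ax axb) (evfs g gin) => k /(lits_child gin); [apply: pos | apply: neg].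
- case/hasInP => g gin evg; apply/hasInP; exists g => //.
  by apply: (IH g gin ax axb) evg => k /(lits_child gin); [apply: pos | apply: neg].
Qed.

Lemma eq_eval_hat f ax axb ax' axb' :
  ax =1 ax' -> axb =1 axb' -> eval_hat ax axb ay f = eval_hat ax' axb' ay f.
Proof.
by move=> eqx eqxb; apply/idP/idP; apply: eval_hat_mono => k _; rewrite ?eqx ?eqxb.
Qed.

Definition refines b ax axb := forall k, if b k then ax k else axb k.

Definition covering ax axb := forall k, ax k || axb k.

Lemma covering_refines ax axb : covering ax axb -> refines ax ax axb.
Proof. by move=> cov k; have := cov k; case: (ax k). Qed.

Lemma eval_hat_refines f b ax axb :
  refines b ax axb -> eval b ay f -> eval_hat ax axb ay f.
Proof.
move=> ref; apply: eval_hat_mono => k _ bk; have := ref k.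
  by rewrite bk.
by rewrite (negbTE bk).
Qed.

(* Copy [b0] on the variables whose [b0]-literal occurs in [g], and [b1]
   elsewhere: this keeps [g] true under [b0], and keeps true under [b1] every
   formula sharing no complementary literal with [g]. *)
Definition merge_on g b0 b1 k := if (b0 k, inl k) \in lits g then b0 k else b1 k.

Lemma merge_on_refines g b0 b1 ax axb :
  refines b0 ax axb -> refines b1 ax axb -> refines (merge_on g b0 b1) ax axb.
Proof. by move=> ref0 ref1 k; rewrite /merge_on; case: (_ \in _). Qed.

Lemma eval_merge_on_l g b0 b1 : eval b0 ay g -> eval (merge_on g b0 b1) ay g.
Proof.
move=> ev0; apply: eval_hat_mono ev0 => k lin b0k; rewrite /merge_on.
  by rewrite b0k lin.
by rewrite (negbTE b0k) lin.
Qed.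

Lemma eval_merge_on_r g h b0 b1 :
  clash_free g h -> eval b1 ay h -> eval (merge_on g b0 b1) ay h.
Proof.
move=> /allP clash; apply: eval_hat_mono => k lin; rewrite /merge_on;
  case: ifP => // gk; case: (b0 k) gk => // gk; have := clash _ gk;
  by rewrite /negl /= lin.
Qed.

Lemma refine_all ax axb fs : covering ax axb -> pairwise (@clash_free _) fs ->
  (forall g, List.In g fs -> exists2 b, refines b ax axb & eval b ay g) ->
  exists2 b, refines b ax axb & all (eval b ay) fs.
Proof.
move=> cov; elim: fs => [|g fs IH] /=; first by exists ax; first exact: covering_refines.
case/andP=> /allInP clash_g clash_fs refs.
have [b0 ref0 ev0] := refs g (or_introl erefl).
have [b1 ref1 ev1] := IH clash_fs (fun h hin => refs h (or_intror hin)).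
exists (merge_on g b0 b1); first exact: merge_on_refines.
rewrite eval_merge_on_l //=; apply/allInP => h hin.
by apply: eval_merge_on_r (clash_g h hin) _; move/allInP: ev1; apply.
Qed.

Lemma eval_hat_refine f ax axb : wDNNF f -> covering ax axb ->
  eval_hat ax axb ay f -> exists2 b, refines b ax axb & eval b ay f.
Proof.
elim/nnf_deep_ind: f ax axb => [bl [k|j]|fs IH|fs IH] ax axb wf cov /=.
- move=> evk {wf}; exists (fun k' => if k' == k then bl else ax k').
    by move=> k'; case: eqVneq => [-> | _]; [move: evk; case: bl | apply: covering_refines].
  by rewrite /eval /= eqxx; case: (bl).
- by exists ax; first exact: covering_refines.
- move/allInP=> evfs; have [wfs clash] := wDNNF_And wf.
  by apply: refine_all => // g gin; apply: IH (wfs g gin) cov (evfs g gin).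
- case/hasInP=> g gin evg; move/allInP: wf => wfs.
  have [b ref evb] := IH g gin ax axb (wfs g gin) cov evg.
  by exists b => //; apply/hasInP; exists g.
Qed.

Definition pin_x (i : 'I_n) (c : bool) ax (k : 'I_n) :=
  if k < i then true else if k == i then c else ax k.

Definition pin_xbar (i : 'I_n) (c : bool) ax (k : 'I_n) :=
  if k < i then true else if k == i then ~~ c else ~~ ax k.

Lemma covering_pin i c ax : covering (pin_x i c ax) (pin_xbar i c ax).
Proof.
move=> k; rewrite /pin_x /pin_xbar; case: (k < i) => //.
by case: (k == i); [case: c | case: (ax k)].
Qed.

Lemma refines_pin i c ax b : refines b (pin_x i c ax) (pin_xbar i c ax) <->
  b =1 (fun k => if k < i then b k else if k == i then c else ax k).
Proof.
rewrite /refines /pin_x /pin_xbar; split=> [ref k | eqb k]; [have := ref k | rewrite eqb];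
  by case: (k < i) => //=; case: (k == i); case: (b k); case: (c); case: (ax k).
Qed.

Lemma DeltaGamma_pinned f c i ax : wDNNF f ->
  DeltaGamma f c i ax ay = ~~ eval_hat (pin_x i c ax) (pin_xbar i c ax) ay f.
Proof.
move=> wf; congr negb; apply/existsP/idP.
- case=> bb evbb; apply: eval_hat_refines evbb; apply/refines_pin => k /=.
  by case: ifP.
- case/(eval_hat_refine wf (covering_pin i c ax)) => b /refines_pin eqb evb.
  exists (finfun b); rewrite /eval -(eq_eval_hat f (ax := b) (axb := fun k => ~~ b k)) //;
    by move=> k; rewrite ffunE -eqb.
Qed.

End Refinement.

Theorem theorem2 (n m : nat) (f : nnf (var n m)) :
  wDNNF f ->
  forall (i : 'I_n) (ax : 'I_n -> bool) (ay : 'I_m -> bool),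
    delta f i ax ay = Delta f i ax ay /\ gamma f i ax ay = Gamma f i ax ay.
Proof.
move=> wf i ax ay; rewrite /Delta /Gamma !DeltaGamma_pinned //.
split; congr negb; apply: eq_eval_hat => k //; rewrite /pin_x /pin_xbar leq_eqVlt;
  by case: (k < i); rewrite ?orbT ?orbF //; case: (k == i).
Qed.
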